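(* Let $M=B\circ S$ where $S$ is Poisson subsampling with rate $r\in[0,1]$ and $B$ is any base mechanism, and let the batch relation be insertion/removal $\simeq_{\pm}$ with induced distance $d_{\mathbb Y}$. Then for all $x\simeq_{K_+,K_-}x'$, $$\Psi_\alpha(m_x\|m_{x'})\le\max_{\mathbf y}\Psi_\alpha\Big(\sum_{i=1}^{K_-+1}b_{y^{(1)}_i}\,\mathrm{Binom}(i-1\mid K_-,r)\ \Big\|\ \sum_{j=1}^{K_++1}b_{y^{(2)}_j}\,\mathrm{Binom}(j-1\mid K_+,r)\Big),$$ where the maximum is over $\mathbf y=(\mathbf y^{(1)},\mathbf y^{(2)})\in\mathbb Y^{K_-+1}\times\mathbb Y^{K_++1}$ subject to $d_{\mathbb Y}(y^{(l)}_t,y^{(l)}_u)\le|t-u|$ for $l\in\{1,2\}$ and all $t,u$, and $d_{\mathbb Y}(y^{(1)}_t,y^{(2)}_u)\le(t-1)+(u-1)$ for all $t,u$.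
   Context: Finite set $\mathbb A$, datasets $x\subseteq\mathbb A$, batches are subsets $y\subseteq x$. Poisson subsampling with rate $r$ has pmf $s_x(y)=r^{|y|}(1-r)^{|x|-|y|}$ for $y\subseteq x$. Base mechanism $B$: each batch $y$ has density $b_y$ on $\mathbb R^D$; $m_x(z)=\sum_y b_y(z)s_x(y)$. Insertion/removal: $y\simeq_\pm y'$ iff $y'=y\cup\{a\}$ for some $a\notin y$ or $y'=y\setminus\{a\}$ for some $a\in y$; $d_{\mathbb Y}$ is the induced distance (length of shortest chain of neighbors). Datasets $x\simeq_{K_+,K_-}x'$ iff $x'=(x\setminus g_-)\cup g_+$ for some $g_-\subseteq x$ with $|g_-|=K_-$ and $g_+$ disjoint from $x$ with $|g_+|=K_+$. $\mathrm{Binom}(k\mid n,r)=\binom nk r^k(1-r)^{n-k}$. $H_\alpha(p\|q)=\int\max\{p-\alpha q,0\}$ ($\alpha\ge0$), $\Lambda_\alpha(p\|q)=\int p^\alpha q^{1-\alpha}$ ($\alpha>1$); $\Psi_\alpha$ is either. *)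

From HB Require Import structures.
From mathcomp Require Import all_boot all_order all_algebra.
From mathcomp Require Import all_classical all_reals all_analysis.
Set Implicit Arguments. Unset Strict Implicit. Unset Printing Implicit Defensive.
Import Order.TTheory GRing.Theory Num.Theory.
Local Open Scope ring_scope.

Section Combinatorics.
Variable A : finType.

Definition nbr (y y' : {set A}) : bool :=
  [exists a, ((a \notin y) && (y' == a |: y)) || ((a \in y) && (y' == y :\ a))].

(* dY_le y y' k  <->  d_Y(y,y') <= k, where d_Y is the length of a shortest
   chain of neighbours from y to y' (a chain y = c_0 ~ c_1 ~ ... ~ c_n = y'
   of length n is [path nbr y s] with [last y s = y'] and [size s = n]). *)
Definition dY_le (y y' : {set A}) (k : nat) : Prop :=
  exists s : seq {set A}, [/\ path nbr y s, last y s = y' & (size s <= k)%N].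

Definition ds_rel (Kp Km : nat) (x x' : {set A}) : Prop :=
  exists gm gp : {set A},
    [/\ gm \subset x, #|gm| = Km, [disjoint gp & x], #|gp| = Kp
      & x' = (x :\: gm) :|: gp].

Definition distn (m n : nat) : nat := ((m - n) + (n - m))%N.
End Combinatorics.

Section Probabilities.
Variables (R : realType) (A : finType).

Definition poisson_pmf (r : R) (x y : {set A}) : R :=
  if y \subset x then r ^+ #|y| * (1 - r) ^+ (#|x| - #|y|) else 0.

Definition binom_pmf (k n : nat) (r : R) : R :=
  'C(n, k)%:R * r ^+ k * (1 - r) ^+ (n - k).
End Probabilities.

Section Divergences.
Context {d : measure_display} {T : measurableType d} {R : realType}.
Variable mu : {measure set T -> \bar R}.

Definition is_density (p : T -> R) : Prop :=
  [/\ measurable_fun setT p, (forall z, 0 <= p z)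
    & (\int[mu]_z (p z)%:E = 1)%E].

Definition is_base_mechanism (A : finType) (b : {set A} -> T -> R) : Prop :=
  forall y, is_density (b y).

Definition mix (A : finType) (b : {set A} -> T -> R) (r : R) (x : {set A})
  : T -> R :=
  fun z => \sum_(y : {set A}) b y z * poisson_pmf r x y.

Definition hockey (alpha : R) (p q : T -> R) : \bar R :=
  (\int[mu]_z (Num.max (p z - alpha * q z) 0)%:E)%E.

(* integrand a^alpha b^(1-alpha), with the usual conventions
   0 * (0)^(1-alpha) = 0 and a^alpha * 0^(1-alpha) = +oo for a > 0 *)
Definition lam_integrand (alpha a c : R) : \bar R :=
  if c == 0 then (if a == 0 then 0%E else +oo%E)
  else ((a `^ alpha) * (c `^ (1 - alpha)))%:E.

Definition lambda_div (alpha : R) (p q : T -> R) : \bar R :=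
  (\int[mu]_z lam_integrand alpha (p z) (q z))%E.

End Divergences.

Inductive divkind := Hockey | Lambda.

Definition valid_alpha {R : realType} (k : divkind) (alpha : R) : Prop :=
  match k with Hockey => 0 <= alpha | Lambda => 1 < alpha end.

Definition Psi {d : measure_display} {T : measurableType d} {R : realType}
  (mu : {measure set T -> \bar R}) (k : divkind) (alpha : R) (p q : T -> R)
  : \bar R :=
  match k with Hockey => hockey mu alpha p q | Lambda => lambda_div mu alpha p q end.

(* feasible tuples y = (y^(1), y^(2)) in Y^(K-+1) x Y^(K++1), 0-based indices:
   d(y1_t, y1_u) <= |t-u|, d(y2_t, y2_u) <= |t-u|,
   d(y1_t, y2_u) <= (t-1)+(u-1)  (= t + u with 0-based indices) *)
Definition feasible (A : finType) (Km Kp : nat)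
  (yy : ('I_Km.+1 -> {set A}) * ('I_Kp.+1 -> {set A})) : Prop :=
  [/\ forall t u : 'I_Km.+1, dY_le (yy.1 t) (yy.1 u) (distn t u),
      forall t u : 'I_Kp.+1, dY_le (yy.2 t) (yy.2 u) (distn t u)
    & forall (t : 'I_Km.+1) (u : 'I_Kp.+1), dY_le (yy.1 t) (yy.2 u) (t + u)%N].
Arguments feasible {A} Km Kp yy.

From Pilot Require Import Defs.
From HB Require Import structures.
From mathcomp Require Import all_boot all_order all_algebra.
From mathcomp Require Import all_classical all_reals all_analysis.
From mathcomp Require Import measurable_realfun.
From mathcomp Require Import ring.
Import Order.TTheory GRing.Theory Num.Theory.
Local Open Scope ring_scope.

(* Both divergences integrate a jointly convex, positively homogeneous
   integrand, so [Psi] is jointly convex: the pairs [(p, q)] with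
   [Psi p q <= V] are closed under convex combinations, and so are the [p]
   (resp. [q]) for a fixed partner.  Conditioning on whether each element
   common to [x] and [x'] is sampled writes [(m_x, m_x')] as a convex
   combination of pairs whose datasets differ only in the [K_-] removed and
   [K_+] inserted elements.  For such a pair, averaging over the order in
   which these elements enter the batch turns each side into a convex
   combination of binomially weighted sums along chains [Y = c_0, ..., c_K]
   of neighbouring batches, and two chains issued from the same [Y] form a
   feasible tuple. *)

Section JointConvexity.
Variable R : realType.
Implicit Types (al a c w : R).

Lemma powR_perspective al a c : 0 <= a -> 0 < c ->
  a `^ al * c `^ (1 - al) = c * (a / c) `^ al.
Proof.
move=> a0 c0.
have powRVx : (c^-1) `^ al = (c `^ al)^-1.
  by rewrite -powR_inv1 ?ltW // -powRrM mulN1r powRN.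
rewrite (powRM _ a0) ?invr_ge0 ?ltW // powRVx.
rewrite powRD; last by apply/implyP => _; rewrite gt_eqF.
rewrite powRr1 ?ltW // powRN.
by rewrite mulrCA mulrA.
Qed.

(* the perspective of the convex map [t |-> t ^ al] is jointly convex *)
Lemma powR_perspectiveD_le al a (a' : R) c (c' : R) : 1 < al ->
  0 <= a -> 0 <= a' -> 0 < c -> 0 < c' ->
  (a + a') `^ al * (c + c') `^ (1 - al)
    <= a `^ al * c `^ (1 - al) + a' `^ al * c' `^ (1 - al).
Proof.
move=> al1 a0 a'0 c0 c'0; have cc0 : 0 < c + c' by rewrite addr_gt0.
rewrite !powR_perspective ?addr_ge0 //.
set t := c / (c + c').
have t0 : 0 <= t by rewrite divr_ge0 ?ltW.
have t1 : t <= 1 by rewrite ler_pdivrMr // mul1r lerDl ltW.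
have conv : (t * (a / c) + (1 - t) * (a' / c')) `^ al
            <= t * (a / c) `^ al + (1 - t) * (a' / c') `^ al.
  have := @convex_powR R al (ltW al1) (Itv01 t0 t1).
  rewrite /= => /(_ (a / c) (a' / c')); rewrite !convRE; apply;
    by rewrite in_setE /= in_itv /= andbT; apply: divr_ge0 => //; exact: ltW.
have {conv} := ler_wpM2l (ltW cc0) conv.
have -> : t * (a / c) + (1 - t) * (a' / c') = (a + a') / (c + c').
  by rewrite /t; field; rewrite !gt_eqF.
have -> : 1 - t = c' / (c + c') by rewrite /t; field; rewrite gt_eqF.
congr (_ <= _); rewrite /t; field; rewrite gt_eqF //.
Qed.

Definition div_integrand (k : divkind) al a c : \bar R :=
  match k with
  | Hockey => (Num.max (a - al * c) 0)%:E
  | Lambda => lam_integrand al a c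
  end.

Lemma div_integrand_ge0 k al a c : (0 <= div_integrand k al a c)%E.
Proof.
case: k => /=; first by rewrite lee_fin le_max lexx orbT.
rewrite /lam_integrand; case: (c == 0); first by case: (a == 0).
by rewrite lee_fin mulr_ge0 // powR_ge0.
Qed.

Lemma div_integrand00 k al : div_integrand k al 0 0 = 0%E.
Proof. by case: k => /=; rewrite ?mulr0 ?subrr ?maxxx // /lam_integrand eqxx. Qed.

Lemma div_integrandZ_le k al w a c : valid_alpha k al ->
  0 <= w -> 0 <= a -> 0 <= c ->
  (div_integrand k al (w * a) (w * c) <= w%:E * div_integrand k al a c)%E.
Proof.
move=> hal w0 a0 c0; case: k hal => /= hal.
  rewrite -EFinM lee_fin ge_max mulr_ge0 ?le_max ?lexx ?orbT // andbT.
  rewrite (_ : w * a - al * (w * c) = w * (a - al * c)); last by ring.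
  by rewrite ler_wpM2l // le_max lexx.
have [->|wn0] := eqVneq w 0; first by rewrite !mul0r /lam_integrand eqxx mul0e.
have wp : 0 < w by rewrite lt0r wn0.
rewrite /lam_integrand !mulf_eq0 (negbTE wn0) /=.
case: eqP => [_|_]; first by case: eqP => _; rewrite ?mule0 ?gt0_muley ?lte_fin.
rewrite -EFinM lee_fin (powRM _ w0 a0) (powRM _ w0 c0).
rewrite (_ : _ * _ = (w `^ al * w `^ (1 - al)) * (a `^ al * c `^ (1 - al))); last by ring.
rewrite -powRD; last by apply/implyP => _.
by rewrite addrC subrK powRr1.
Qed.

Lemma div_integrandD_le k al a (a' : R) c (c' : R) : valid_alpha k al ->
  0 <= a -> 0 <= a' -> 0 <= c -> 0 <= c' ->
  (div_integrand k al (a + a') (c + c')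
     <= div_integrand k al a c + div_integrand k al a' c')%E.
Proof.
move=> hal a0 a'0 c0 c'0; case: k hal => /= hal.
  rewrite -EFinD lee_fin ge_max addr_ge0 ?le_max ?lexx ?orbT // andbT.
  rewrite (_ : _ - _ = (a - al * c) + (a' - al * c')); last by ring.
  by rewrite lerD // le_max lexx.
have ge0 x y : (0 <= lam_integrand al x y)%E := div_integrand_ge0 Lambda al x y.
rewrite /lam_integrand.
have [cc0|ccn0] := eqVneq (c + c') 0.
  move/eqP: cc0; rewrite paddr_eq0 // => /andP[/eqP-> /eqP->]; rewrite eqxx.
  have [->|an0] := eqVneq a 0; have [->|a'n0] := eqVneq a' 0;
    by rewrite ?addr0 ?add0r ?eqxx ?(negbTE an0) ?(negbTE a'n0) ?adde0 ?add0e ?leey.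
have [c00|cn0] := eqVneq c 0.
  move: ccn0; rewrite c00 add0r => ccn0.
  have [->|an0] := eqVneq a 0; first by rewrite add0r add0e ?(negbTE ccn0).
  by rewrite addye ?leey // -ltNye (lt_le_trans _ (ge0 a' c')).
have [c'00|c'n0] := eqVneq c' 0.
  move: ccn0; rewrite c'00 addr0 => ccn0.
  have [->|a'n0] := eqVneq a' 0; first by rewrite addr0 adde0 ?(negbTE ccn0).
  by rewrite addey ?leey // -ltNye (lt_le_trans _ (ge0 a c)).
rewrite -EFinD lee_fin.
by apply: powR_perspectiveD_le; rewrite // lt0r ?cn0 ?c'n0.
Qed.

Lemma div_integrand_sum_le k al (I : Type) (s : seq I) (D : pred I) (w a c : I -> R) :
  valid_alpha k al -> (forall i, D i -> [/\ 0 <= w i, 0 <= a i & 0 <= c i]) ->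
  (div_integrand k al (\sum_(i <- s | D i) w i * a i) (\sum_(i <- s | D i) w i * c i)
   <= \sum_(i <- s | D i) (w i)%:E * div_integrand k al (a i) (c i))%E.
Proof.
move=> hal h0; elim: s => [|i s IH]; first by rewrite !big_nil div_integrand00.
rewrite !big_cons; case: ifP => // /h0[w0 a0 c0].
have sum_ge0 (f : I -> R) : (forall j, D j -> 0 <= f j) ->
    0 <= \sum_(j <- s | D j) w j * f j.
  by move=> f0; apply: sumr_ge0 => j Dj; have [wj0 _ _] := h0 j Dj; rewrite mulr_ge0 ?f0.
apply: le_trans; first apply: div_integrandD_le => //.
- by rewrite mulr_ge0.
- by apply: sum_ge0 => j /h0[].
- by rewrite mulr_ge0.
- by apply: sum_ge0 => j /h0[].
- by apply: leeD => //; apply: div_integrandZ_le.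
Qed.

End JointConvexity.
Arguments div_integrand {R}.

Section ConvexClosed.
Variables (R : numDomainType) (T : Type).

Definition convex_closed (P : (T -> R) -> Prop) :=
  forall (I : finType) (D : pred I) (w : I -> R) (f : I -> T -> R),
  (forall i, D i -> 0 <= w i) -> \sum_(i | D i) w i = 1 -> (forall i, D i -> P (f i)) ->
  P (fun z => \sum_(i | D i) w i * f i z).

Lemma convex_closed_shift P (h : T -> R) :
  convex_closed P -> convex_closed (fun f => P (fun z => h z + f z)).
Proof.
move=> cP I D w f w0 w1 Pf.
suff -> : (fun z => h z + \sum_(i | D i) w i * f i z)
          = (fun z => \sum_(i | D i) w i * (h z + f i z)) by apply: cP.
apply/funext => z; under [RHS]eq_bigr do rewrite mulrDr.
by rewrite big_split /= -mulr_suml w1 mul1r.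
Qed.

End ConvexClosed.
Arguments convex_closed {R T}.

Section PsiConvexity.
Context {d : measure_display} {T : measurableType d} {R : realType}.
Variables (mu : {measure set T -> \bar R}) (k : divkind) (al : R).
Hypothesis hal : valid_alpha k al.

Lemma PsiE (p q : T -> R) :
  Psi mu k al p q = (\int[mu]_z div_integrand k al (p z) (q z))%E.
Proof. by case: k. Qed.

Lemma measurable_div_integrand (p q : T -> R) :
  measurable_fun setT p -> measurable_fun setT q ->
  measurable_fun setT (fun z => div_integrand k al (p z) (q z)).
Proof.
move=> mp mq; case: k => /=.
  apply/measurable_EFinP.
  apply: (@measurable_maxr _ _ _ _ (fun z => p z - al * q z) (cst 0)) => //.
  exact: measurable_funB (measurable_funM (measurable_cst _) mq).
rewrite /lam_integrand; apply: measurable_fun_ifT.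
- exact: measurable_fun_eqr.
- by apply: measurable_fun_ifT => //; exact: measurable_fun_eqr.
- apply/measurable_EFinP; apply: measurable_funM.
  + exact: measurableT_comp (measurable_powR _) mp.
  + exact: measurableT_comp (measurable_powR _) mq.
Qed.

Lemma measurable_fun_wsum (I : finType) (D : pred I) (w : I -> R) (f : I -> T -> R) :
  (forall i, D i -> measurable_fun setT (f i)) ->
  measurable_fun setT (fun z => \sum_(i | D i) w i * f i z).
Proof.
move=> mf; under eq_fun do rewrite big_mkcond /=.
apply: measurable_sum => i; case: (boolP (D i)) => Di; last exact: measurable_cst.
exact: measurable_funM (measurable_cst _) (mf i Di).
Qed.

Definition nonneg_measurable (p : T -> R) :=
  measurable_fun setT p /\ forall z, 0 <= p z.

Lemma nonneg_measurable_wsum (I : finType) (D : pred I) (w : I -> R) (f : I -> T -> R) :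
  (forall i, D i -> 0 <= w i /\ nonneg_measurable (f i)) ->
  nonneg_measurable (fun z => \sum_(i | D i) w i * f i z).
Proof.
move=> hf; split; first by apply: measurable_fun_wsum => i /hf[_ []].
by move=> z; apply: sumr_ge0 => i /hf[w0 [_ f0]]; rewrite mulr_ge0.
Qed.

Lemma Psi_wsum_le (I : finType) (D : pred I) (w : I -> R) (f g : I -> T -> R) :
  (forall i, D i -> [/\ 0 <= w i, nonneg_measurable (f i) & nonneg_measurable (g i)]) ->
  (Psi mu k al (fun z => \sum_(i | D i) w i * f i z)%R (fun z => \sum_(i | D i) w i * g i z)%R
   <= \sum_(i | D i) (w i)%:E * Psi mu k al (f i) (g i))%E.
Proof.
move=> hfg.
pose h i z := if D i then ((w i)%:E * div_integrand k al (f i z) (g i z))%E else 0%E.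
have h_ge0 i z : (0 <= h i z)%E.
  rewrite /h; case: (boolP (D i)) => // /hfg[w0 _ _].
  by rewrite mule_ge0 ?lee_fin ?div_integrand_ge0.
have mh i : measurable_fun setT (h i).
  rewrite /h; case: (boolP (D i)) => [/hfg[_ [mf _] [mg _]]|_]; last exact: measurable_cst.
  exact/measurable_funeM/measurable_div_integrand.
have [[mF _] [mG _]] : nonneg_measurable (fun z => \sum_(i | D i) w i * f i z) /\
    nonneg_measurable (fun z => \sum_(i | D i) w i * g i z).
  by split; apply: nonneg_measurable_wsum => i /hfg[].
rewrite PsiE (@le_trans _ _ (\int[mu]_z \sum_(i <- index_enum I) h i z)%E) //.
  apply: ge0_le_integral => //.
  - by move=> z _; exact: div_integrand_ge0.
  - exact: measurable_div_integrand.
  - exact: emeasurable_sum.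
  move=> z _; rewrite -big_mkcond /=.
  by apply: div_integrand_sum_le => // i /hfg[w0 [_ f0] [_ g0]].
rewrite ge0_integral_sum // [leRHS]big_mkcond /=; apply: lee_sum => i _.
rewrite /h; case: (boolP (D i)) => [/hfg[w0 [mf f0] [mg g0]]|_]; last by rewrite integral0.
rewrite ge0_integralZl ?PsiE ?lee_fin //.
- exact: measurable_div_integrand.
- by move=> z _; exact: div_integrand_ge0.
Qed.

Definition Psi_bounded (V : \bar R) (p q : T -> R) :=
  [/\ nonneg_measurable p, nonneg_measurable q & (Psi mu k al p q <= V)%E].

Lemma Psi_bounded_convex V (I : finType) (D : pred I) (w : I -> R) (f g : I -> T -> R) :
  (forall i, D i -> 0 <= w i) -> \sum_(i | D i) w i = 1 ->
  (forall i, D i -> Psi_bounded V (f i) (g i)) ->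
  Psi_bounded V (fun z => \sum_(i | D i) w i * f i z) (fun z => \sum_(i | D i) w i * g i z).
Proof.
move=> w0 w1 hfg; split.
- by apply: nonneg_measurable_wsum => i Di; have [? _ _] := hfg i Di; split; rewrite ?w0.
- by apply: nonneg_measurable_wsum => i Di; have [_ ? _] := hfg i Di; split; rewrite ?w0.
apply: le_trans; first apply: Psi_wsum_le => i Di.
  by have [? ? _] := hfg i Di; split; rewrite ?w0.
apply: (@le_trans _ _ (\sum_(i | D i) (w i)%:E * V)%E).
  by apply: lee_sum => i Di; have [_ _ ?] := hfg i Di; rewrite lee_wpmul2l ?lee_fin ?w0.
by rewrite -ge0_sume_distrl ?sumEFin ?w1 ?mul1e // => i Di; rewrite lee_fin w0.
Qed.

Lemma Psi_bounded_convex_l V q : convex_closed (fun p => Psi_bounded V p q).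
Proof.
move=> I D w f w0 w1 hf; have := Psi_bounded_convex V I D w f (fun=> q) w0 w1 hf.
by congr Psi_bounded; apply/funext => z; rewrite -mulr_suml w1 mul1r.
Qed.

Lemma Psi_bounded_convex_r V p : convex_closed (fun q => Psi_bounded V p q).
Proof.
move=> I D w g w0 w1 hg; have := Psi_bounded_convex V I D w (fun=> p) g w0 w1 hg.
by congr Psi_bounded; apply/funext => z; rewrite -mulr_suml w1 mul1r.
Qed.

End PsiConvexity.
Arguments Psi_bounded_convex {d T R mu k al}.
Arguments Psi_bounded_convex_l {d T R mu k al}.
Arguments Psi_bounded_convex_r {d T R mu k al}.

Section BatchDistance.
Context {A : finType}.
Implicit Types y : {set A}.

Definition nbr_or_eq y y' := (y == y') || nbr y y'.

Lemma dY_leW y y' m n : dY_le y y' m -> (m <= n)%N -> dY_le y y' n.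
Proof. by case=> s [p l sz] mn; exists s; split; rewrite // (leq_trans sz). Qed.

Lemma dY_le_refl y n : dY_le y y n.
Proof. by exists [::]. Qed.

Lemma dY_le_trans {y1 y2 y3 m n} :
  dY_le y1 y2 m -> dY_le y2 y3 n -> dY_le y1 y3 (m + n).
Proof.
case=> s1 [p1 l1 z1] [s2 [p2 l2 z2]]; exists (s1 ++ s2).
by rewrite cat_path last_cat l1 p1 p2 size_cat leq_add.
Qed.

Lemma nbr_sym {y y'} : nbr y y' -> nbr y' y.
Proof.
case/existsP => a /orP[/andP[ay /eqP->]|/andP[ay /eqP->]]; apply/existsP; exists a.
  by rewrite finset.setU11 /= finset.setU1K.
by rewrite finset.setD11 /= (finset.setD1K ay) eqxx.
Qed.

Lemma dY_le_nbr {y y'} : nbr y y' -> dY_le y y' 1.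
Proof. by move=> h; exists [:: y']; rewrite /= h. Qed.

Lemma dY_le_nbr_or_eq {y y'} : nbr_or_eq y y' -> dY_le y y' 1.
Proof. by case/orP => [/eqP->|]; [exact: dY_le_refl | exact: dY_le_nbr]. Qed.

Lemma dY_le_sym {y y' n} : dY_le y y' n -> dY_le y' y n.
Proof.
case=> s [p <- sz]; apply: (@dY_leW _ _ (size s)) => //; elim: s y p {sz} => [|y1 s IH] y /=.
  by move=> _; exact: dY_le_refl.
case/andP => yy1 /IH; rewrite -addn1 => h.
exact: dY_le_trans h (dY_le_nbr (nbr_sym yy1)).
Qed.

Lemma dY_le_path {Y s} : path nbr_or_eq Y s -> forall i j, (i <= j)%N -> (j <= size s)%N ->
  dY_le (nth finset.set0 (Y :: s) i) (nth finset.set0 (Y :: s) j) (j - i).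
Proof.
elim: s Y => [|y1 s IH] Y /=.
  by move=> _ i [|//]; rewrite leqn0 => /eqP-> _; exact: dY_le_refl.
case/andP => Yy1 p [|i] [|j] //= ij js.
- exact: dY_le_refl.
- rewrite subn0 -add1n; apply: dY_le_trans (dY_le_nbr_or_eq Yy1) _.
  by have := IH _ p 0 j (leq0n _) js; rewrite subn0.
- by rewrite subSS; exact: IH.
Qed.

Lemma feasible_paths {Km Kp Y s1 s2} :
  path nbr_or_eq Y s1 -> size s1 = Km -> path nbr_or_eq Y s2 -> size s2 = Kp ->
  feasible Km Kp ((fun t : 'I_Km.+1 => nth finset.set0 (Y :: s1) t),
                  (fun u : 'I_Kp.+1 => nth finset.set0 (Y :: s2) u)).
Proof.
move=> p1 z1 p2 z2.
have along s K : path nbr_or_eq Y s -> size s = K -> forall t u : 'I_K.+1,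
    dY_le (nth finset.set0 (Y :: s) t) (nth finset.set0 (Y :: s) u) (distn t u).
  move=> p sz t u; have us : (u <= size s)%N by rewrite sz -ltnS.
  have ts : (t <= size s)%N by rewrite sz -ltnS.
  rewrite /distn; case: (leqP t u) => tu.
    by rewrite (eqP (_ : t - u == 0)%N) ?subn_eq0 // add0n; apply: dY_le_path.
  rewrite (eqP (_ : u - t == 0)%N) ?subn_eq0 1?ltnW // addn0.
  by apply/dY_le_sym/dY_le_path => //; exact: ltnW.
have from_root s K (t : 'I_K.+1) : path nbr_or_eq Y s -> size s = K ->
    dY_le Y (nth finset.set0 (Y :: s) t) t.
  move=> p sz; rewrite -[X in dY_le _ _ X]subn0.
  by apply: (dY_le_path p 0); rewrite // -ltnS sz.
split; [exact: along | exact: along | move=> t u].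
exact: dY_le_trans (dY_le_sym (from_root _ _ t p1 z1)) (from_root _ _ u p2 z2).
Qed.

End BatchDistance.

Section SubsetSums.
Context {A : finType} {R : realType} {T : Type}.
Variable b : {set A} -> T -> R.
Implicit Types (Y G S : {set A}) (g : nat -> R).

Definition subset_sum g Y G (z : T) : R :=
  \sum_(S : {set A} | S \subset G) g #|S| * b (Y :|: S) z.

Definition chain_sum g K (l : seq {set A}) (z : T) : R :=
  \sum_(i < K.+1) ('C(K, i)%:R * g i) * b (nth finset.set0 l i) z.

Definition poisson_weight (r : R) n i := r ^+ i * (1 - r) ^+ (n - i).

Definition mix_on r Y G := subset_sum (poisson_weight r #|G|) Y G.

Lemma sum_subsetD1 {a G} (F : {set A} -> R) : a \in G ->
  \sum_(S : {set A} | S \subset G :\ a) F (a |: S)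
    = \sum_(S : {set A} | (S \subset G) && (a \in S)) F S.
Proof.
move=> aG; rewrite [RHS](reindex_onto (fun S => a |: S) (fun S => S :\ a)) /=; last first.
  by move=> S /andP[_ aS]; rewrite finset.setD1K.
apply: eq_bigl => S; rewrite finset.setU11 andbT finset.subUset finset.sub1set aG.
rewrite finset.subsetD1 /=; case: (boolP (a \in S)) => aS /=; last first.
  by rewrite finset.setU1K // eqxx.
rewrite (finset.setUidPr _) ?finset.sub1set //.
suff -> : (S :\ a == S) = false by [].
apply/negbTE/eqP => SaS.
by move: (finset.setD11 a S); rewrite SaS aS.
Qed.

Lemma sum_subsets_card G (F : {set A} -> R) :
  \sum_(a in G) \sum_(S : {set A} | (S \subset G) && (a \in S)) F S
    = \sum_(S : {set A} | S \subset G) F S *+ #|S|.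
Proof.
rewrite (exchange_big_dep (fun S => S \subset G)) /= => [|a S _ /andP[] //].
apply: eq_bigr => S SG; rewrite -sumr_const; apply: eq_bigl => a.
by rewrite SG /=; case: (boolP (a \in S)) => aS; rewrite ?andbT ?andbF ?(fintype.subsetP SG).
Qed.

Lemma mix_on_split r a Y G z : a \in G ->
  mix_on r Y G z = (1 - r) * mix_on r Y (G :\ a) z + r * mix_on r (a |: Y) (G :\ a) z.
Proof.
move=> aG; have cG : #|G| = (#|G :\ a|).+1 by rewrite (cardsD1 a G) aG.
rewrite /mix_on /subset_sum (bigID (fun S => a \in S)) /= addrC !mulr_sumr.
rewrite -(sum_subsetD1 (fun S => _ * b (Y :|: S) z) aG); congr (_ + _).
  rewrite (eq_bigl (fun S => S \subset G :\ a)) => [|S]; last by rewrite finset.subsetD1.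
  apply: eq_bigr => S SGa; have /subset_leq_card SG := SGa.
  by rewrite /poisson_weight cG subSn // exprS; ring.
apply: eq_bigr => S SGa; have /subset_leq_card SG := SGa.
have aS : a \notin S by move: SGa; rewrite finset.subsetD1 => /andP[].
rewrite /poisson_weight cardsU1 aS add1n cG subSS exprS.
by rewrite finset.setUCA finset.setUA; ring.
Qed.

(* [C(K+1, j+1) = C(K, j) (K+1) / (j+1)] moves the binomial factor into the weights *)
Definition shift_weight g K j := g j.+1 * K.+1%:R / j.+1%:R.

Lemma chain_sum_cons g K Y l z :
  chain_sum g K.+1 (Y :: l) z = g 0%N * b Y z + chain_sum (shift_weight g K) K l z.
Proof.
rewrite /chain_sum big_ord_recl /= bin0 mul1r; congr (_ + _).
apply: eq_bigr => j _; congr (_ * _); rewrite /bump /= add1n /shift_weight.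
have j1 : j.+1%:R != 0 :> R by rewrite pnatr_eq0.
have binS : 'C(K.+1, j.+1)%:R = 'C(K, j)%:R * K.+1%:R / j.+1%:R :> R.
  have /(congr1 (fun n => n%:R : R)) := mul_bin_diag K.+1 j; rewrite !natrM /= => e.
  by apply: (mulfI j1); rewrite -e; field.
by rewrite binS; field.
Qed.

Lemma subset_sum_average g K Y G z : #|G| = K.+1 ->
  subset_sum g Y G z = \sum_(a in G) K.+1%:R^-1 *
    (g 0%N * b Y z + subset_sum (shift_weight g K) (a |: Y) (G :\ a) z).
Proof.
move=> cG; have K1 : K.+1%:R != 0 :> R by rewrite pnatr_eq0.
pose F S := shift_weight g K #|S|.-1 * b (Y :|: S) z.
have shifted a : a \in G ->
    subset_sum (shift_weight g K) (a |: Y) (G :\ a) z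
    = \sum_(S : {set A} | (S \subset G) && (a \in S)) F S.
  move=> aG; rewrite -(sum_subsetD1 F aG); apply: eq_bigr => S.
  rewrite finset.subsetD1 => /andP[_ aS].
  by rewrite /F cardsU1 aS finset.setUCA finset.setUA.
rewrite -mulr_sumr big_split /= sumr_const cG (eq_bigr _ shifted) sum_subsets_card.
rewrite /subset_sum (bigD1 finset.set0) ?finset.sub0set //= cards0 finset.setU0.
rewrite [X in _ * (_ + X)](bigD1 finset.set0) ?finset.sub0set //= cards0 mulr0n add0r.
rewrite mulrDr -[_ * b Y z *+ _]mulr_natl mulKf //; congr (_ + _).
rewrite mulr_sumr.
apply: eq_bigr => S /andP[_ Sn0]; rewrite /F /shift_weight.
have : (0 < #|S|)%N by rewrite card_gt0.
case: #|S| => [//|n] _ /=; rewrite -mulr_natr; field.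
by rewrite !(addrC 1) !natr1 !pnatr_eq0.
Qed.

Lemma nbr_or_eq_setU1 a Y : nbr_or_eq Y (a |: Y).
Proof.
case: (boolP (a \in Y)) => aY.
  by rewrite /nbr_or_eq (finset.setUidPr _) ?finset.sub1set ?eqxx.
by apply/orP; right; apply/existsP; exists a; rewrite aY eqxx.
Qed.

Lemma subset_sum_chain_hull {P g Y G K} : convex_closed P -> #|G| = K ->
  (forall s, path nbr_or_eq Y s -> size s = K -> P (chain_sum g K (Y :: s))) ->
  P (subset_sum g Y G).
Proof.
elim: K P g Y G => [|K IH] P g Y G cP cG HP.
  have -> : subset_sum g Y G = chain_sum g 0 [:: Y].
    apply/funext => z; rewrite /subset_sum /chain_sum big_ord1 (cards0_eq cG).
    rewrite (big_pred1 finset.set0) ?finset.setU0 ?cards0 ?bin0 ?mul1r // => S.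
    by rewrite finset.subset0.
  exact: HP.
have -> : subset_sum g Y G = fun z => \sum_(a in G) K.+1%:R^-1 *
    (g 0%N * b Y z + subset_sum (shift_weight g K) (a |: Y) (G :\ a) z).
  by apply/funext => z; rewrite (subset_sum_average _ _ _ _ _ cG).
apply: (cP) => [a _|| a aG]; first by rewrite invr_ge0 ler0n.
  by rewrite sumr_const cG -[LHS]mulr_natr mulVf ?pnatr_eq0.
apply: (IH (fun f => P (fun z => g 0%N * b Y z + f z))).
- exact: convex_closed_shift.
- by move: cG; rewrite (cardsD1 a G) aG add1n => -[].
- move=> s ps zs; have := HP ((a |: Y) :: s).
  rewrite /= nbr_or_eq_setU1 ps zs => /(_ isT erefl).
  by congr P; apply/funext => z; rewrite chain_sum_cons.
Qed.

Lemma chain_sum_poisson r K l :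
  chain_sum (poisson_weight r K) K l
  = fun z => \sum_(i < K.+1) b (nth finset.set0 l i) z * binom_pmf i K r.
Proof.
by apply/funext => z; apply: eq_bigr => i _; rewrite /binom_pmf /poisson_weight; ring.
Qed.

End SubsetSums.
Arguments poisson_weight {R}.

Section Subsampling.
Context {d : measure_display} {T : measurableType d} {R : realType}.
Variables (mu : {measure set T -> \bar R}) (A : finType) (b : {set A} -> T -> R).
Variables (r : R) (k : divkind) (al : R) (Kp Km : nat) (V : \bar R).
Hypotheses (hb : is_base_mechanism mu b) (hr : 0 <= r <= 1) (hal : valid_alpha k al).
Hypothesis feasible_le : forall yy, feasible Km Kp yy ->
  (Psi mu k al
     (fun z => \sum_(i < Km.+1) b (yy.1 i) z * binom_pmf i Km r)%R
     (fun z => \sum_(j < Kp.+1) b (yy.2 j) z * binom_pmf j Kp r)%R <= V)%E.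

Local Notation bounded := (Psi_bounded mu k al V).

Lemma nonneg_measurable_chain K l :
  nonneg_measurable (chain_sum b (poisson_weight r K) K l).
Proof.
have [r0 r1] : 0 <= r /\ 0 <= 1 - r by case/andP: hr => ? ?; rewrite subr_ge0.
apply: nonneg_measurable_wsum => i _; split.
  by rewrite mulr_ge0 ?ler0n // mulr_ge0 // exprn_ge0.
by case: (hb (nth finset.set0 l i)).
Qed.

Lemma bounded_chains Y s1 s2 :
  path nbr_or_eq Y s1 -> size s1 = Km -> path nbr_or_eq Y s2 -> size s2 = Kp ->
  bounded (chain_sum b (poisson_weight r Km) Km (Y :: s1))
          (chain_sum b (poisson_weight r Kp) Kp (Y :: s2)).
Proof.
move=> p1 z1 p2 z2; split; try exact: nonneg_measurable_chain.
rewrite !chain_sum_poisson; exact: feasible_le (feasible_paths p1 z1 p2 z2).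
Qed.

Lemma bounded_mix_on (Y gm gp : {set A}) : #|gm| = Km -> #|gp| = Kp ->
  bounded (mix_on b r Y gm) (mix_on b r Y gp).
Proof.
move=> cgm cgp; rewrite /mix_on cgm cgp.
apply: (subset_sum_chain_hull b (Psi_bounded_convex_l hal V _) cgm) => s1 p1 z1.
apply: (subset_sum_chain_hull b (Psi_bounded_convex_r hal V _) cgp) => s2 p2 z2.
exact: bounded_chains.
Qed.

Lemma bounded_mix_on_common (gm gp C Y : {set A}) : #|gm| = Km -> #|gp| = Kp ->
  [disjoint C & gm] -> [disjoint C & gp] ->
  bounded (mix_on b r Y (C :|: gm)) (mix_on b r Y (C :|: gp)).
Proof.
move=> cgm cgp; move cC: #|C| => n; elim: n C Y cC => [|n IH] C Y cC dm dp.
  by rewrite (cards0_eq cC) !finset.set0U; exact: bounded_mix_on.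
have [a aC] : exists a, a \in C by apply/finset.set0Pn; rewrite -card_gt0 cC.
have cCa : #|C :\ a| = n by move: cC; rewrite (cardsD1 a C) aC add1n => -[].
have sCa : C :\ a \subset C := finset.subD1set C a.
have CaG (G : {set A}) : [disjoint C & G] -> (C :|: G) :\ a = (C :\ a) :|: G.
  move=> dG; apply/finset.setP => x; rewrite !finset.inE.
  by case: (eqVneq x a) => [->|] //=; rewrite (disjointFr dG aC).
pose w (i : bool) := if i then r else 1 - r.
pose f (G : {set A}) (i : bool) := mix_on b r (if i then a |: Y else Y) ((C :\ a) :|: G).
have split_mix (G : {set A}) : [disjoint C & G] ->
    mix_on b r Y (C :|: G) = fun z => \sum_(i | xpredT i) w i * f G i z.
  move=> dG; apply/funext => z; rewrite big_bool /= addrC.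
  rewrite (mix_on_split _ _ a); last by rewrite finset.inE aC.
  by rewrite (CaG G dG).
rewrite (split_mix _ dm) (split_mix _ dp); apply: (Psi_bounded_convex hal).
- by case=> _; case/andP: hr => r0 r1; rewrite /w ?subr_ge0.
- by rewrite /w big_bool /= addrC subrK.
- by case=> _; apply: IH; rewrite // (disjointWl sCa).
Qed.

Lemma mix_on_set0 x : mix b r x = mix_on b r finset.set0 x.
Proof.
apply/funext => z; rewrite /mix /mix_on /subset_sum [RHS]big_mkcond /=.
apply: eq_bigr => S _; rewrite /Defs.poisson_pmf /poisson_weight finset.set0U.
by case: ifP => _; rewrite ?mulr0 // mulrC.
Qed.

Lemma Psi_mix_le x x' : ds_rel Kp Km x x' -> (Psi mu k al (mix b r x) (mix b r x') <= V)%E.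
Proof.
case=> gm [gp [gmx cgm gpx cgp ->]].
have ex : x = (x :\: gm) :|: gm.
  by rewrite finset.setDE finset.setUIl (finset.setUC (~: gm)) finset.setUCr finset.setIT
    (finset.setUidPl gmx).
have dm : [disjoint x :\: gm & gm] by rewrite finset.disjoints_subset finset.subsetDr.
have dp : [disjoint x :\: gm & gp].
  by rewrite disjoint_sym; apply: disjointWr gpx; exact: finset.subsetDl.
have [_ _] := bounded_mix_on_common _ _ _ finset.set0 cgm cgp dm dp.
by rewrite !mix_on_set0 -ex.
Qed.

End Subsampling.

Local Open Scope classical_set_scope.

Theorem theorem3p7 (d : measure_display) (T : measurableType d) (R : realType)
  (mu : {measure set T -> \bar R}) (A : finType) (b : {set A} -> T -> R)
  (r : R) (k : divkind) (alpha : R) (Kp Km : nat) (x x' : {set A}) :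
  is_base_mechanism mu b ->
  0 <= r <= 1 ->
  valid_alpha k alpha ->
  ds_rel Kp Km x x' ->
  (Psi mu k alpha (mix b r x) (mix b r x') <=
   ereal_sup
     [set Psi mu k alpha
        (fun z => (\sum_(i < Km.+1) b (yy.1 i) z * binom_pmf i Km r)%R)
        (fun z => (\sum_(j < Kp.+1) b (yy.2 j) z * binom_pmf j Kp r)%R)
     | yy in feasible Km Kp])%E.
Proof.
move=> hb hr hal; apply: Psi_mix_le => // yy fyy.
by apply: ereal_sup_ubound; exists yy.
Qed.
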